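(* For every $k$ for which the quantities in the context are defined (i.e. $k\le k_{\max}$), $h(v^{(k)})=\min\{h(v): v\in n_0+\mathcal K_k(PAP,b_0),\ \|v\|=1\}$.
   Context: Let $A\in\mathbb{R}^{n\times n}$ be symmetric, $C\in\mathbb{R}^{n\times m}$ ($m<n$) full column rank, $b\in\mathbb{R}^m$, $n_0=C(C^{\top}C)^{-1}b$ with $\|n_0\|<1$, $\gamma=\sqrt{1-\|n_0\|^2}$, $P=I-C(C^{\top}C)^{-1}C^{\top}$ (orthogonal projector onto $\mathcal N(C^{\top})$), $b_0=PAn_0\neq0$, $h(v)=v^{\top}Av$. $\mathcal K_k(PAP,b_0)=\operatorname{span}\{b_0,PAPb_0,\dots,(PAP)^{k-1}b_0\}$. Lanczos process: with $M=PAP$, $q_0=0$, $\beta_1=\|b_0\|$, $q_1=b_0/\|b_0\|$, for $j=1,2,\dots$: $\alpha_j=q_j^{\top}Mq_j$, $\widehat q_{j+1}=Mq_j-\alpha_jq_j-\beta_jq_{j-1}$, $\beta_{j+1}=\|\widehat q_{j+1}\|$, and if $\beta_{j+1}>0$, $q_{j+1}=\widehat q_{j+1}/\beta_{j+1}$; $k_{\max}$ is the smallest $k$ with $\beta_{k+1}=0$. $Q_k=[q_1,\dots,q_k]$ has orthonormal columns spanning $\mathcal K_k(PAP,b_0)$ and $T_k=Q_k^{\top}PAPQ_k$ is tridiagonal. rLGopt: minimize $\lambda$ over $(\lambda,x)\in\mathbb{R}\times\mathbb{R}^k$ with $(T_k-\lambda I)x=-\|b_0\|e_1$ and $\|x\|=\gamma$;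 $(\mu^{(k)},x^{(k)})$ is its minimizer, and $v^{(k)}=n_0+Q_kx^{(k)}$. *)

From HB Require Import structures.
From mathcomp Require Import all_boot all_order all_algebra.
From mathcomp Require Import reals.
Set Implicit Arguments. Unset Strict Implicit. Unset Printing Implicit Defensive.
Import Order.TTheory GRing.Theory Num.Theory.
Local Open Scope ring_scope.

Section Lanczos.
Variable R : realType.

Definition vnorm (n : nat) (v : 'cV[R]_n) : R := Num.sqrt ((v^T *m v) 0 0).

Definition hq (n : nat) (A : 'M[R]_n) (v : 'cV[R]_n) : R := (v^T *m A *m v) 0 0.

Definition projP (n m : nat) (C : 'M[R]_(n, m)) : 'M[R]_n :=
  1%:M - C *m invmx (C^T *m C) *m C^T.

Definition nzero (n m : nat) (C : 'M[R]_(n, m)) (b : 'cV[R]_m) : 'cV[R]_n :=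
  C *m invmx (C^T *m C) *m b.

Definition krylov (n k : nat) (M : 'M[R]_n) (b0 : 'cV[R]_n) (v : 'cV[R]_n) : Prop :=
  exists c : 'I_k -> R, v = \sum_(i < k) c i *: (M ^+ i *m b0).

(* One Lanczos step: from (q_{j-1}, q_j, beta_j) to (q_j, q_{j+1}, beta_{j+1}).
   (When beta_{j+1} = 0 the new q is set to 0; it is never used below k_max.) *)
Definition lanczos_step (n : nat) (M : 'M[R]_n)
    (s : 'cV[R]_n * 'cV[R]_n * R) : 'cV[R]_n * 'cV[R]_n * R :=
  let: (qp, q, beta) := s in
  let alpha := (q^T *m M *m q) 0 0 in
  let qh := M *m q - alpha *: q - beta *: qp in
  let beta' := vnorm qh in
  (q, (if 0 < beta' then beta'^-1 *: qh else 0), beta').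

(* lanczos_state M b0 j = (q_j, q_{j+1}, beta_{j+1}), with q_0 = 0,
   q_1 = b0/||b0||, beta_1 = ||b0||. *)
Fixpoint lanczos_state (n : nat) (M : 'M[R]_n) (b0 : 'cV[R]_n) (j : nat)
    : 'cV[R]_n * 'cV[R]_n * R :=
  match j with
  | O => (0, (vnorm b0)^-1 *: b0, vnorm b0)
  | S j' => lanczos_step M (lanczos_state M b0 j')
  end.

(* q_(j+1) (0-based index j) *)
Definition lanczos_q (n : nat) (M : 'M[R]_n) (b0 : 'cV[R]_n) (j : nat) : 'cV[R]_n :=
  (lanczos_state M b0 j).1.2.

(* beta_(j+1) *)
Definition lanczos_beta (n : nat) (M : 'M[R]_n) (b0 : 'cV[R]_n) (j : nat) : R :=
  (lanczos_state M b0 j).2.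

(* k <= k_max, where k_max is the smallest k with beta_{k+1} = 0:
   beta_{j+1} <> 0 for all 1 <= j < k. *)
Definition le_kmax (n : nat) (M : 'M[R]_n) (b0 : 'cV[R]_n) (k : nat) : Prop :=
  forall j : nat, (1 <= j < k)%N -> lanczos_beta M b0 j != 0.

Definition lanczosQ (n k : nat) (M : 'M[R]_n) (b0 : 'cV[R]_n) : 'M[R]_(n, k) :=
  \matrix_(i < n, j < k) lanczos_q M b0 j i 0.

Definition lanczosT (n k : nat) (M : 'M[R]_n) (b0 : 'cV[R]_n) : 'M[R]_k :=
  (lanczosQ k M b0)^T *m M *m lanczosQ k M b0.

Definition e1 (k : nat) : 'cV[R]_k := \col_(i < k) (if val i == 0%N then 1 else 0).

Definition rLG_feasible (k : nat) (T : 'M[R]_k) (nb0 gamma : R)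
    (lam : R) (x : 'cV[R]_k) : Prop :=
  (T - lam%:M) *m x = - (nb0 *: e1 k) /\ vnorm x = gamma.

Definition rLG_minimizer (k : nat) (T : 'M[R]_k) (nb0 gamma : R)
    (mu : R) (x : 'cV[R]_k) : Prop :=
  rLG_feasible T nb0 gamma mu x /\
  forall (lam : R) (y : 'cV[R]_k), rLG_feasible T nb0 gamma lam y -> mu <= lam.

Definition is_min_on (n : nat) (S : 'cV[R]_n -> Prop) (f : 'cV[R]_n -> R)
    (w : 'cV[R]_n) : Prop :=
  S w /\ forall v, S v -> f w <= f v.

End Lanczos.

(* The Lanczos vectors q_1, ..., q_k are orthonormal (three-term recurrence for the
   symmetric M = PAP) and lie in K_k(M, b0); since that space is spanned by k vectors,
   they form a basis of it. They also lie in the range of P, so Q_k^T n0 = 0 and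
   v = n0 + Q_k y runs over the feasible set exactly when ||y|| = gamma, with
   h(v) = h(n0) + y^T T_k y + 2 ||b0|| e1^T y. This is a trust-region problem on a
   sphere. A global minimiser y* exists by compactness and satisfies the Lagrange
   equation (T_k - lam) y* = -||b0|| e1 for some lam >= mu; for two such stationary
   points the objective values differ by (lam - mu)/2 ||y* - x||^2, so x minimises too. *)

From HB Require Import structures.
From mathcomp Require Import all_boot all_order all_algebra.
From mathcomp Require Import boolp reals classical_sets topology normedtype derive.
From mathcomp Require Import ring lra.
Set Implicit Arguments. Unset Strict Implicit. Unset Printing Implicit Defensive.
Import Order.TTheory GRing.Theory Num.Theory.
Import numFieldNormedType.Exports.
Local Open Scope classical_set_scope.
Local Open Scope ring_scope.

Section DotProduct.
Variable R : realType.

Definition dotv n (u v : 'cV[R]_n) : R := (u^T *m v) 0 0.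

Lemma dotvE n (u v : 'cV[R]_n) : dotv u v = \sum_i u i 0 * v i 0.
Proof. by rewrite /dotv mxE; apply: eq_bigr => i _; rewrite mxE. Qed.

Lemma dotvC n (u v : 'cV[R]_n) : dotv u v = dotv v u.
Proof. by rewrite !dotvE; apply: eq_bigr => i _; rewrite mulrC. Qed.

Lemma dotvDl n (u v w : 'cV[R]_n) : dotv (u + v) w = dotv u w + dotv v w.
Proof. by rewrite /dotv linearD mulmxDl mxE. Qed.

Lemma dotvZl n a (u w : 'cV[R]_n) : dotv (a *: u) w = a * dotv u w.
Proof. by rewrite /dotv linearZ -scalemxAl mxE. Qed.

Lemma dotvNl n (u w : 'cV[R]_n) : dotv (- u) w = - dotv u w.
Proof. by rewrite -scaleN1r dotvZl mulN1r. Qed.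

Lemma dotvBl n (u v w : 'cV[R]_n) : dotv (u - v) w = dotv u w - dotv v w.
Proof. by rewrite dotvDl dotvNl. Qed.

Lemma dotv0l n (w : 'cV[R]_n) : dotv 0 w = 0.
Proof. by rewrite -(scale0r (0 : 'cV[R]_n)) dotvZl mul0r. Qed.

Lemma dotvDr n (u v w : 'cV[R]_n) : dotv w (u + v) = dotv w u + dotv w v.
Proof. by rewrite dotvC dotvDl !(dotvC w). Qed.

Lemma dotvZr n a (u w : 'cV[R]_n) : dotv w (a *: u) = a * dotv w u.
Proof. by rewrite dotvC dotvZl dotvC. Qed.

Lemma dotvNr n (u w : 'cV[R]_n) : dotv w (- u) = - dotv w u.
Proof. by rewrite dotvC dotvNl dotvC. Qed.

Lemma dotvBr n (u v w : 'cV[R]_n) : dotv w (u - v) = dotv w u - dotv w v.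
Proof. by rewrite dotvDr dotvNr. Qed.

Lemma dotv_mulmx n p (B : 'M[R]_(n, p)) (u : 'cV[R]_n) (v : 'cV[R]_p) :
  dotv u (B *m v) = dotv (B^T *m u) v.
Proof. by rewrite /dotv trmx_mul trmxK mulmxA. Qed.

Lemma dotv_ge0 n (u : 'cV[R]_n) : 0 <= dotv u u.
Proof. by rewrite dotvE; apply: sumr_ge0 => i _; rewrite -expr2 sqr_ge0. Qed.

Lemma dotv_eq0 n (u : 'cV[R]_n) : (dotv u u == 0) = (u == 0).
Proof.
apply/idP/eqP => [|->]; last by rewrite dotv0l.
rewrite dotvE psumr_eq0 => [/allP u0|i _]; last by rewrite -expr2 sqr_ge0.
apply/matrixP => i j; rewrite ord1 mxE.
by have := u0 i (mem_index_enum _); rewrite -expr2 sqrf_eq0 => /eqP.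
Qed.

Lemma vnorm_ge0 n (u : 'cV[R]_n) : 0 <= vnorm u.
Proof. exact: sqrtr_ge0. Qed.

Lemma vnorm_sqr n (u : 'cV[R]_n) : vnorm u ^+ 2 = dotv u u.
Proof. exact/sqr_sqrtr/dotv_ge0. Qed.

Lemma vnorm_gt0 n (u : 'cV[R]_n) : (0 < vnorm u) = (u != 0).
Proof. by rewrite sqrtr_gt0 lt_def dotv_ge0 dotv_eq0 andbT. Qed.

Lemma vnorm_eq n (u : 'cV[R]_n) (c : R) : 0 <= c ->
  vnorm u = c <-> dotv u u = c ^+ 2.
Proof.
move=> c_ge0; split=> [<-|uc]; first by rewrite vnorm_sqr.
by rewrite /vnorm -/(dotv u u) uc sqrtr_sqr ger0_norm.
Qed.

Lemma dotv_normalize n (u : 'cV[R]_n) : u != 0 ->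
  dotv ((vnorm u)^-1 *: u) ((vnorm u)^-1 *: u) = 1.
Proof.
rewrite -vnorm_gt0 => u_gt0; rewrite dotvZl dotvZr -vnorm_sqr mulrA -expr2.
by rewrite -exprMn mulVf ?gt_eqF ?expr1n.
Qed.

Definition householder n (w y : 'cV[R]_n) : 'cV[R]_n :=
  y - (2 * dotv y w / dotv w w) *: w.

Lemma dotv_householder n (w y : 'cV[R]_n) : dotv w w != 0 ->
  dotv (householder w y) (householder w y) = dotv y y.
Proof.
move=> w0; rewrite !(dotvBl, dotvBr, dotvZl, dotvZr) (dotvC w y).
by field.
Qed.

Lemma mulmx_tr_eq0 p q (W : 'M[R]_(p, q)) : W *m W^T = 0 -> W = 0.
Proof.
move=> WW0; apply/row_matrixP => i; rewrite row0; apply/eqP.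
have : dotv (row i W)^T (row i W)^T = (W *m W^T) i i.
  by rewrite dotvE !mxE; apply: eq_bigr => j _; rewrite !mxE.
by rewrite WW0 mxE => /eqP; rewrite dotv_eq0 trmx_eq0.
Qed.

End DotProduct.

Lemma le0_of_le_linear (R : realFieldType) (a K : R) :
  (forall e, 0 < e <= 1 -> a <= e * K) -> a <= 0.
Proof.
move=> aK; rewrite leNgt; apply/negP => a_gt0.
have aleK : a <= K by rewrite -[K]mul1r; apply: aK; rewrite ltr01 lexx.
have K_gt0 : 0 < K := lt_le_trans a_gt0 aleK.
have /aK : 0 < a / (K *+ 2) <= 1.
  by rewrite divr_gt0 ?pmulrn_rgt0 //= ler_pdivrMr ?pmulrn_rgt0 // mul1r mulr2n; lra.
have -> : a / (K *+ 2) * K = a / 2 by rewrite mulr2n; field; lra.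
lra.
Qed.

Lemma ler_quad_norm (R : realDomainType) (a b d e : R) : 0 <= e -> e <= 1 ->
  a + e * b + e ^+ 2 * d <= `|a| + `|b| + `|d|.
Proof.
move=> e_ge0 e_le1; have e2_le1 : e ^+ 2 <= 1 by rewrite expr_le1.
have eb : e * b <= `|b|.
  exact: le_trans (ler_wpM2l e_ge0 (ler_norm b)) (ler_piMl (normr_ge0 b) e_le1).
have e2d : e ^+ 2 * d <= `|d|.
  apply: le_trans (ler_wpM2l (exprn_ge0 2 e_ge0) (ler_norm d)) _.
  exact: ler_piMl (normr_ge0 d) e2_le1.
have := ler_norm a; lra.
Qed.

Section SphereMinimum.
Variables (R : realType) (k : nat).

Lemma mulmx_tr_continuous p (B : 'M[R]_(p, k)) i :
  continuous (fun r : 'rV[R]_k => (B *m r^T) i 0).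
Proof.
have -> : (fun r : 'rV[R]_k => (B *m r^T) i 0) = fun r => \sum_j B i j * r 0 j.
  by apply: funext => r; rewrite mxE; apply: eq_bigr => j _; rewrite mxE.
apply: continuous_big => [|j _]; first exact: add_continuous.
by move=> r; apply: continuousM; [exact: cst_continuous | exact: coord_continuous].
Qed.

Lemma dotv_tr_continuous (B : 'M[R]_k) :
  continuous (fun r : 'rV[R]_k => dotv r^T (B *m r^T)).
Proof.
have -> : (fun r : 'rV[R]_k => dotv r^T (B *m r^T)) =
          fun r => \sum_i r 0 i * (B *m r^T) i 0.
  by apply: funext => r; rewrite dotvE; apply: eq_bigr => i _; rewrite mxE.
apply: continuous_big => [|i _]; first exact: add_continuous.
move=> r; apply: continuousM; [exact: coord_continuous | exact: mulmx_tr_continuous].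
Qed.

Lemma sphere_rV_compact (c : R) : compact [set r : 'rV[R]_k | dotv r^T r^T = c].
Proof.
apply: bounded_closed_compact; last first.
  have -> : [set r : 'rV[R]_k | dotv r^T r^T = c] =
            (fun r => dotv r^T (1%:M *m r^T)) @^-1` [set x | x = c].
    by apply: funext => r; rewrite /= mul1mx.
  apply: preimage_closed; last exact: closed_eq.
  by move=> r _; exact: dotv_tr_continuous.
rewrite /= /bounded_near /globally /=.
near=> M => r /= rc; rewrite [leLHS]/Num.norm /= mx_normrE.
apply: bigmax_le => [|[i j] _ /=].
  by near: M; apply: nbhs_pinfty_ge; exact: num_real.
have : r i j ^+ 2 <= `|c|.
  rewrite -rc dotvE (bigD1 j) //= !mxE ord1 -expr2 (le_trans _ (ler_norm _)) //.
  by rewrite lerDl; apply: sumr_ge0 => l _; rewrite !mxE -expr2 sqr_ge0.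
rewrite -real_normK ?num_real // => rc'.
have : `|r i j| <= 1 + `|c|.
  have [r_le1|r_gt1] := lerP `|r i j| 1; first by have := normr_ge0 c; lra.
  have : `|r i j| <= `|r i j| ^+ 2 by rewrite expr2 ler_peMr // ltW.
  lra.
move/le_trans; apply; near: M; apply: nbhs_pinfty_ge; exact: num_real.
Unshelve. all: by end_near.
Qed.

(* Compactness is available for row vectors, hence the transposes. *)
Lemma sphere_min_exists (f : 'cV[R]_k -> R) (c : R) (z : 'cV[R]_k) :
  continuous (fun r : 'rV[R]_k => f r^T) -> dotv z z = c ->
  exists2 y, dotv y y = c & forall w, dotv w w = c -> f y <= f w.
Proof.
move=> f_cont zc.
have [||r] := @EVT_min_rV R k (fun r => f r^T) _ _ (@sphere_rV_compact c).
- by exists z^T; rewrite /= trmxK.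
- exact: continuous_subspaceT.
rewrite inE /= => rc rmin; exists r^T => // w wc.
by rewrite -[w]trmxK; apply: rmin; rewrite inE /= trmxK.
Qed.

End SphereMinimum.

Section TrustRegion.
Variables (R : realType) (k : nat) (T : 'M[R]_k) (g : 'cV[R]_k).
Hypothesis symT : T^T = T.

Definition trs_obj (y : 'cV[R]_k) : R := dotv y (T *m y) + 2 * dotv g y.

Definition trs_residual lam (y : 'cV[R]_k) := (T - lam%:M) *m y + g.

Lemma trs_residual_eq0 lam (y : 'cV[R]_k) :
  trs_residual lam y = 0 <-> (T - lam%:M) *m y = - g.
Proof.
by rewrite /trs_residual; split=> [/eqP|->]; rewrite ?addNr // addr_eq0 => /eqP.
Qed.

Lemma shift_mulmx lam (y : 'cV[R]_k) : (T - lam%:M) *m y = T *m y - lam *: y.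
Proof. by rewrite mulmxBl mul_scalar_mx. Qed.

Lemma dotv_shift_sym lam (u v : 'cV[R]_k) :
  dotv u ((T - lam%:M) *m v) = dotv v ((T - lam%:M) *m u).
Proof. by rewrite dotv_mulmx linearB /= tr_scalar_mx symT dotvC. Qed.

Lemma trs_obj_sub lam (y z : 'cV[R]_k) : dotv z z = dotv y y ->
  trs_obj z - trs_obj y = dotv (z - y) ((T - lam%:M) *m (z - y))
                          + 2 * dotv (trs_residual lam y) (z - y).
Proof.
move=> zy; have Tyz : dotv y (T *m z) = dotv z (T *m y).
  by rewrite dotv_mulmx symT dotvC.
rewrite /trs_obj /trs_residual !shift_mulmx.
rewrite !(mulmxBr, dotvBl, dotvBr, dotvDl, dotvZl, dotvZr).
rewrite Tyz !(dotvC (T *m _)) (dotvC y z) zy; lra.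
Qed.

Lemma trs_obj_sub_stationary lam mu (x y : 'cV[R]_k) :
  trs_residual mu x = 0 -> trs_residual lam y = 0 -> dotv x x = dotv y y ->
  trs_obj y - trs_obj x = (lam - mu) / 2 * dotv (y - x) (y - x).
Proof.
move=> hx hy xy; have := trs_obj_sub mu (esym xy); have := trs_obj_sub lam xy.
rewrite hx hy !dotv0l -[x - y]opprB mulmxN !(dotvNl, dotvNr) opprK.
rewrite !shift_mulmx !(dotvBr, dotvZr); lra.
Qed.

Lemma trs_obj_tr_continuous : continuous (fun r : 'rV[R]_k => trs_obj r^T).
Proof.
rewrite /trs_obj => r.
apply: (@continuousD _ R^o _ (fun r => dotv r^T (T *m r^T))).
  exact: dotv_tr_continuous.
apply: continuousM; first exact: cst_continuous.
exact: (@mulmx_tr_continuous R k 1 g^T 0).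
Qed.

Lemma trs_min_residual_sqr (c lam e : R) (y r : 'cV[R]_k) :
  0 < c -> dotv y y = c -> (forall w, dotv w w = c -> trs_obj y <= trs_obj w) ->
  trs_residual lam y = r -> dotv r y = 0 -> 0 < e ->
  dotv r r ^+ 2 <= e * (c * dotv (r + e *: y) ((T - lam%:M) *m (r + e *: y))).
Proof.
move=> c_gt0 yc ymin r_def r_y e_gt0; set w := r + e *: y.
have ww : dotv w w = dotv r r + e ^+ 2 * c.
  by rewrite /w !(dotvDl, dotvDr, dotvZl, dotvZr) r_y dotvC r_y yc; lra.
have ww_gt0 : 0 < dotv w w.
  by rewrite ww; have := dotv_ge0 r; have := exprn_gt0 2 e_gt0; nra.
have yw : dotv y w = e * c by rewrite /w dotvDr dotvZr (dotvC y r) r_y yc add0r.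
have rw : dotv r w = dotv r r by rewrite /w dotvDr dotvZr r_y mulr0 addr0.
(* Compare with the reflection of [y] along [w], which stays on the sphere. *)
have := ymin (householder w y); rewrite dotv_householder ?lt0r_neq0 // yc.
move=> /(_ erefl); rewrite -subr_ge0 (trs_obj_sub lam) ?dotv_householder ?lt0r_neq0 //.
rewrite /householder addrAC subrr add0r r_def mulmxN -scalemxAr yw.
set s := _ / _; have s_ww : s * dotv w w = 2 * (e * c) by rewrite divfK ?lt0r_neq0.
have s_gt0 : 0 < s by rewrite divr_gt0 // !mulr_gt0.
rewrite !(dotvNl, dotvNr, dotvZl, dotvZr) rw => H.
have h1 : 2 * dotv r r <= s * dotv w ((T - lam%:M) *m w).
  by rewrite -(ler_pM2l s_gt0); lra.
have := ler_wpM2r (ltW ww_gt0) h1; rewrite [s * _ * _]mulrAC s_ww ww.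
have := mulr_ge0 (dotv_ge0 r) (mulr_ge0 (sqr_ge0 e) (ltW c_gt0)); lra.
Qed.

Lemma trs_min_stationary (c : R) (y : 'cV[R]_k) : 0 < c -> dotv y y = c ->
  (forall w, dotv w w = c -> trs_obj y <= trs_obj w) ->
  exists lam, trs_residual lam y = 0.
Proof.
(* [lam] makes the residual orthogonal to [y]; [trs_min_residual_sqr] then kills it. *)
move=> c_gt0 yc ymin; pose lam := (dotv y (T *m y) + dotv g y) / c.
exists lam; apply/eqP; rewrite -dotv_eq0 -sqrf_eq0 eq_le sqr_ge0 andbT.
have r_y : dotv (trs_residual lam y) y = 0.
  rewrite /trs_residual shift_mulmx !(dotvDl, dotvNl, dotvZl) (dotvC (T *m y)) yc.
  by rewrite /lam divfK ?gt_eqF //; lra.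
have small := trs_min_residual_sqr c_gt0 yc ymin erefl r_y.
move: (trs_residual lam y) r_y small => r r_y small.
pose Q w := dotv w ((T - lam%:M) *m w); pose b := dotv r ((T - lam%:M) *m y).
apply: (@le0_of_le_linear _ _ (c * (`|Q r| + `|2 * b| + `|Q y|))).
move=> e /andP[e_gt0 e_le1]; apply: le_trans (small e e_gt0) _.
rewrite !ler_pM2l // -/(Q _) {1}/Q mulmxDr -scalemxAr.
rewrite !(dotvDl, dotvDr, dotvZl, dotvZr) (dotv_shift_sym lam y r) -/b -/(Q r) -/(Q y).
have := ler_quad_norm (Q r) (2 * b) (Q y) (ltW e_gt0) e_le1; lra.
Qed.

Lemma trs_min_of_least_multiplier (c mu : R) (x : 'cV[R]_k) : 0 < c ->
  trs_residual mu x = 0 -> dotv x x = c ->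
  (forall lam y, trs_residual lam y = 0 -> dotv y y = c -> mu <= lam) ->
  forall z, dotv z z = c -> trs_obj x <= trs_obj z.
Proof.
move=> c_gt0 x_stat xc mu_min z zc.
have [y yc ymin] := sphere_min_exists trs_obj_tr_continuous zc.
have [lam y_stat] := trs_min_stationary c_gt0 yc ymin.
apply: le_trans (ymin z zc); rewrite -subr_ge0.
rewrite (trs_obj_sub_stationary x_stat y_stat) ?xc ?yc //.
by rewrite mulr_ge0 ?dotv_ge0 // divr_ge0 // subr_ge0 (mu_min lam y).
Qed.

End TrustRegion.

Lemma rLG_minimizer_trs_min (R : realType) k (T : 'M[R]_k) (beta gam mu : R)
    (x : 'cV[R]_k) : T^T = T -> 0 < gam -> rLG_minimizer T beta gam mu x ->
  is_min_on (fun y => vnorm y = gam) (trs_obj T (beta *: e1 R k)) x.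
Proof.
move=> symT gam_gt0 [[x_stat x_gam] mu_min].
have sphereE y := @vnorm_eq _ _ y _ (ltW gam_gt0).
split=> // z /sphereE.
apply: (trs_min_of_least_multiplier (c := gam ^+ 2) (mu := mu) symT).
- exact: exprn_gt0.
- exact/trs_residual_eq0.
- exact/sphereE.
- move=> lam y /trs_residual_eq0 y_stat /sphereE y_gam.
  exact: mu_min lam y (conj y_stat y_gam).
Qed.

Section Projector.
Variables (R : realType) (n m : nat) (C : 'M[R]_(n, m)).
Hypothesis rankC : \rank C = m.

Lemma gram_unitmx : C^T *m C \in unitmx.
Proof.
rewrite -row_free_unit -kermx_eq0; set K := kermx _.
have KCT : K *m C^T = 0.
  by apply: mulmx_tr_eq0; rewrite trmx_mul trmxK mulmxA -(mulmxA K) mulmx_ker mul0mx.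
have CT_free : row_free C^T by rewrite /row_free mxrank_tr rankC.
by rewrite -(mulmx_free_eq0 _ CT_free) KCT.
Qed.

Lemma projP_sym : (projP C)^T = projP C.
Proof.
rewrite /projP linearB /= trmx1 !trmx_mul trmxK trmx_inv trmx_mul trmxK.
by rewrite mulmxA.
Qed.

Lemma projP_mulC : projP C *m C = 0.
Proof.
by rewrite /projP mulmxBl mul1mx -!mulmxA mulVmx ?gram_unitmx // mulmx1 subrr.
Qed.

Lemma projP_idem : projP C *m projP C = projP C.
Proof.
have CTP : C^T *m projP C = 0 by rewrite -projP_sym -trmx_mul projP_mulC trmx0.
by rewrite {1}/projP mulmxBl mul1mx -!mulmxA CTP !mulmx0 subr0.
Qed.

Lemma projP_nzero (b : 'cV[R]_m) : projP C *m nzero C b = 0.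
Proof. by rewrite /nzero !mulmxA projP_mulC !mul0mx. Qed.

End Projector.

Section LanczosVectors.
Variables (R : realType) (n : nat) (M : 'M[R]_n) (b0 : 'cV[R]_n).

(* [lq j] and [lbeta j] are the paper's q_j and beta_j, with [lq 0 = 0]; beware that
   [lanczos_q M b0 j] is q_(j+1). [lqhat j] is the unnormalised q_(j+1). *)
Definition lq (j : nat) : 'cV[R]_n := if j is j'.+1 then lanczos_q M b0 j' else 0.
Definition lbeta (j : nat) : R := if j is j'.+1 then lanczos_beta M b0 j' else 0.
Definition lalpha (j : nat) : R := ((lq j)^T *m M *m lq j) 0 0.
Definition lqhat (j : nat) : 'cV[R]_n :=
  M *m lq j - lalpha j *: lq j - lbeta j *: lq j.-1.

Lemma lanczos_stateE j : lanczos_state M b0 j = (lq j, lq j.+1, lbeta j.+1).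
Proof.
case: j => [//|j]; rewrite /lq /lbeta /lanczos_q /lanczos_beta /=.
by case: (lanczos_state M b0 j) => [[]].
Qed.

Lemma lbeta_succ j : lbeta j.+2 = vnorm (lqhat j.+1).
Proof. by rewrite [LHS]/= /lanczos_beta /= lanczos_stateE. Qed.

Lemma lq_succ j :
  lq j.+2 = if 0 < lbeta j.+2 then (lbeta j.+2)^-1 *: lqhat j.+1 else 0.
Proof. by rewrite lbeta_succ [LHS]/= /lanczos_q /= lanczos_stateE. Qed.

Definition krylov_mx (i : nat) : 'M[R]_(i, n) := \matrix_(l < i) (M ^+ l *m b0)^T.

Lemma krylov_mxP i (v : 'cV[R]_n) : krylov i M b0 v <-> (v^T <= krylov_mx i)%MS.
Proof.
split=> [[c ->]|/submxP[D vD]].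
  rewrite linear_sum; apply: summx_sub => l _; rewrite linearZ; apply: scalemx_sub.
  by apply: (eq_row_sub l); rewrite rowK.
exists (fun l => D 0 l); rewrite -[v]trmxK vD mulmx_sum_row linear_sum /=.
by apply: eq_bigr => l _; rewrite linearZ /= /krylov_mx rowK trmxK.
Qed.

Lemma krylov_fixed (P : 'M[R]_n) i (v : 'cV[R]_n) :
  P *m M = M -> P *m b0 = b0 -> krylov i M b0 v -> P *m v = v.
Proof.
move=> PM Pb0 [c ->]; rewrite mulmx_sumr; apply: eq_bigr => l _.
rewrite -scalemxAr mulmxA; congr (_ *: _); case: (val l) => [|j].
  by rewrite expr0 mulmx1 mul1mx.
by rewrite exprS mulmxE mulrA -mulmxE PM.
Qed.

Lemma krylov_mx_widen i j : (i <= j)%N -> (krylov_mx i <= krylov_mx j)%MS.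
Proof.
by move=> ij; apply/row_subP => l; apply: (eq_row_sub (widen_ord ij l)); rewrite !rowK.
Qed.

Lemma krylov_mx_mulM i : (krylov_mx i *m M^T <= krylov_mx i.+1)%MS.
Proof.
apply/row_subP => l; apply: (eq_row_sub (@Ordinal i.+1 l.+1 (ltn_ord l))).
by rewrite row_mul !rowK -trmx_mul mulmxA mulmxE -exprS.
Qed.

Lemma lq_krylov j : ((lq j)^T <= krylov_mx j)%MS.
Proof.
suff: ((lq j)^T <= krylov_mx j)%MS /\ ((lq j.+1)^T <= krylov_mx j.+1)%MS by case.
elim: j => [|j [IHj IHj1]].
  split; first by rewrite linear0 sub0mx.
  by rewrite linearZ scalemx_sub //; apply: (eq_row_sub ord0); rewrite rowK mul1mx.
split=> //; rewrite lq_succ; case: ifP => _; last by rewrite linear0 sub0mx.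
rewrite linearZ scalemx_sub // /lqhat !linearB !linearZ /= -/(lq j.+1) trmx_mul.
rewrite !addmx_sub ?scalemx_sub //.
- exact: submx_trans (submxMr _ IHj1) (krylov_mx_mulM _).
- rewrite -scaleN1r scalemx_sub //.
  exact: submx_trans IHj1 (krylov_mx_widen (leqnSn _)).
- rewrite -scaleN1r scalemx_sub //.
  exact: submx_trans IHj (krylov_mx_widen (leqW (leqnSn _))).
Qed.

Hypothesis symM : M^T = M.
Hypothesis b0_neq0 : b0 != 0.
Variable k : nat.
Hypothesis kmax : le_kmax M b0 k.

Lemma lbeta_gt0 j : (j < k)%N -> 0 < lbeta j.+1.
Proof.
case: j => [_|j jk]; first by rewrite /= vnorm_gt0.
by rewrite lt_def kmax ?andTb //= -/(lbeta j.+2) lbeta_succ sqrtr_ge0.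
Qed.

Lemma lq_succ_pos j : (0 < j < k)%N -> lq j.+1 = (lbeta j.+1)^-1 *: lqhat j.
Proof. by case: j => [//|j] /andP[_ jk]; rewrite lq_succ lbeta_gt0. Qed.

Lemma lanczos_mul j : (0 < j < k)%N ->
  M *m lq j = lbeta j.+1 *: lq j.+1 + lalpha j *: lq j + lbeta j *: lq j.-1.
Proof.
move=> /[dup] jk /andP[_ /lbeta_gt0 beta_gt0].
by rewrite lq_succ_pos // scalerA mulfV ?gt_eqF // scale1r /lqhat addrAC !subrK.
Qed.

Lemma lq_norm j : (0 < j <= k)%N -> dotv (lq j) (lq j) = 1.
Proof.
case: j => [//|[_|j jk]]; first exact: dotv_normalize.
have beta_gt0 : 0 < lbeta j.+2 by apply: lbeta_gt0.
rewrite lq_succ beta_gt0 lbeta_succ; apply: dotv_normalize.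
by rewrite -vnorm_gt0 -lbeta_succ.
Qed.

Lemma lq_orth_next N : (N < k)%N ->
  (forall i j, (i <= N)%N -> (j <= N)%N ->
     dotv (lq i) (lq j) = ((i == j) && (0 < i)%N)%:R) ->
  forall i, (i <= N)%N -> dotv (lq i) (lq N.+1) = 0.
Proof.
move=> Nk orthN [|i] iN; first by rewrite dotv0l.
case: N Nk orthN iN => [//|N] Nk orthN iN.
rewrite [lq N.+2]lq_succ_pos // dotvZr /lqhat !(dotvBr, dotvZr) dotv_mulmx symM.
move: iN; rewrite leq_eqVlt ltnS => /orP[/eqP[->]|iN].
  rewrite lq_norm; last exact: ltnW Nk.
  rewrite (orthN N.+1 N) // (gtn_eqF (ltnSn N)) mulr0 subr0 mulr1.
  by rewrite /lalpha -mulmxA -/(dotv _ _) dotvC subrr mulr0.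
rewrite lanczos_mul; last exact: leq_ltn_trans iN (ltnW Nk).
have iN1 : (i <= N)%N := ltnW iN; have iN2 : (i <= N.+1)%N := leqW iN1.
rewrite !(dotvDl, dotvZl) !orthN //.
rewrite !eqSS (ltn_eqF iN) (ltn_eqF (iN1 : (i < N.+1)%N)) !ltn0Sn !andbT andFb.
by case: eqP => [<-|_]; rewrite ?mulr1n ?mulr0n; lra.
Qed.

Lemma lanczos_orthonormal i j : (i <= k)%N -> (j <= k)%N ->
  dotv (lq i) (lq j) = ((i == j) && (0 < i)%N)%:R.
Proof.
suff orth N : (N <= k)%N -> forall i j, (i <= N)%N -> (j <= N)%N ->
    dotv (lq i) (lq j) = ((i == j) && (0 < i)%N)%:R by apply: orth.
clear i j; elim: N => [_ [|//] [|//] _ _|N IH Nk i j]; first by rewrite dotv0l.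
have orthN := IH (ltnW Nk).
rewrite leq_eqVlt => /orP[/eqP->|iN]; rewrite leq_eqVlt => /orP[/eqP->|jN].
- by rewrite eqxx lq_norm.
- by rewrite dotvC (lq_orth_next Nk orthN jN) (gtn_eqF jN).
- by rewrite (lq_orth_next Nk orthN iN) (ltn_eqF iN).
- exact: orthN.
Qed.

Lemma lanczosQ_col j : col j (lanczosQ k M b0) = lq j.+1.
Proof. by apply/colP => i; rewrite !mxE. Qed.

Lemma lanczosQ_tr_mul (v : 'cV[R]_n) j :
  ((lanczosQ k M b0)^T *m v) j 0 = dotv (lq j.+1) v.
Proof. by rewrite -lanczosQ_col dotvE !mxE; apply: eq_bigr => i _; rewrite !mxE. Qed.

Lemma lanczosQ_orthonormal : (lanczosQ k M b0)^T *m lanczosQ k M b0 = 1%:M.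
Proof.
apply/matrixP => i j; have := lanczos_orthonormal (ltn_ord i) (ltn_ord j).
by rewrite eqSS andbT dotvE !mxE => <-; apply: eq_bigr => a _; rewrite !mxE.
Qed.

Lemma lanczosQ_tr_b0 : (lanczosQ k M b0)^T *m b0 = vnorm b0 *: e1 R k.
Proof.
have b0_gt0 : 0 < vnorm b0 by rewrite vnorm_gt0.
have b0E : vnorm b0 *: lq 1 = b0 by rewrite scalerA divff ?scale1r ?gt_eqF.
apply/colP => j; rewrite lanczosQ_tr_mul !mxE.
have -> : dotv (lq j.+1) b0 = vnorm b0 * dotv (lq j.+1) (lq 1) by rewrite -dotvZr b0E.
rewrite lanczos_orthonormal ?(leq_ltn_trans (leq0n j)) // eqSS andbT.
by case: (val j == 0%N).
Qed.

Lemma lanczosQ_tr_krylov : ((lanczosQ k M b0)^T <= krylov_mx k)%MS.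
Proof.
apply/row_subP => j; rewrite -tr_col lanczosQ_col.
exact: submx_trans (lq_krylov j.+1) (krylov_mx_widen (ltn_ord j)).
Qed.

Lemma krylov_lanczosQ_tr : (krylov_mx k <= (lanczosQ k M b0)^T)%MS.
Proof.
(* Q^T has rank k by orthonormality and the Krylov matrix has only k rows. *)
rewrite -(geq_leqif (mxrank_leqif_sup lanczosQ_tr_krylov)).
apply: leq_trans (rank_leq_row _) _.
by rewrite -[X in (X <= _)%N](mxrank1 R k) -lanczosQ_orthonormal mxrankM_maxl.
Qed.

Lemma krylov_lanczosQP (v : 'cV[R]_n) :
  krylov k M b0 v <-> exists y, v = lanczosQ k M b0 *m y.
Proof.
rewrite krylov_mxP; split=> [vK|[y ->]].
  have /submxP[D vD] := submx_trans vK krylov_lanczosQ_tr.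
  by exists D^T; rewrite -[v]trmxK vD trmx_mul trmxK.
by rewrite trmx_mul; exact: submx_trans (submxMl _ _) lanczosQ_tr_krylov.
Qed.

Lemma lanczosQ_fixed (P : 'M[R]_n) :
  P *m M = M -> P *m b0 = b0 -> P *m lanczosQ k M b0 = lanczosQ k M b0.
Proof.
move=> PM Pb0; apply/matrixP => i j.
have Qj : krylov k M b0 (col j (lanczosQ k M b0)).
  by apply/krylov_lanczosQP; exists (delta_mx j 0); rewrite colE.
have := congr1 (fun v : 'cV[R]_n => v i 0) (krylov_fixed PM Pb0 Qj).
by rewrite colE mulmxA -!colE !mxE.
Qed.

End LanczosVectors.

Section AffineReduction.
Variables (R : realType) (n k : nat) (A : 'M[R]_n) (n0 : 'cV[R]_n) (Q : 'M[R]_(n, k)).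
Hypotheses (symA : A^T = A) (QTQ : Q^T *m Q = 1%:M) (QTn0 : Q^T *m n0 = 0).

Lemma dotv_affine (y : 'cV[R]_k) :
  dotv (n0 + Q *m y) (n0 + Q *m y) = dotv n0 n0 + dotv y y.
Proof.
rewrite !(dotvDl, dotvDr) (dotvC (Q *m y)) !dotv_mulmx QTn0 dotv0l mulmxA QTQ.
by rewrite mul1mx add0r addr0.
Qed.

Lemma hq_affine (y : 'cV[R]_k) :
  hq A (n0 + Q *m y) = hq A n0 + trs_obj (Q^T *m A *m Q) (Q^T *m (A *m n0)) y.
Proof.
have cross : dotv n0 (A *m (Q *m y)) = dotv (Q^T *m (A *m n0)) y.
  by rewrite !dotv_mulmx symA.
have cross' : dotv (Q *m y) (A *m n0) = dotv (Q^T *m (A *m n0)) y.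
  by rewrite dotvC dotv_mulmx.
have quad : dotv (Q *m y) (A *m (Q *m y)) = dotv y (Q^T *m (A *m (Q *m y))).
  by rewrite dotvC dotv_mulmx dotvC.
rewrite /hq /trs_obj -!mulmxA -!/(dotv _ _) mulmxDr !(dotvDl, dotvDr).
by rewrite cross cross' quad; lra.
Qed.

End AffineReduction.

Section ProjectedLanczos.
Variables (R : realType) (n m : nat) (A : 'M[R]_n) (C : 'M[R]_(n, m)).
Variables (b : 'cV[R]_m) (k : nat).
Hypotheses (symA : A^T = A) (rankC : \rank C = m).

Local Notation P := (projP C).
Local Notation n0 := (nzero C b).
Local Notation M := (P *m A *m P).
Local Notation b0 := (P *m A *m n0).
Local Notation Q := (lanczosQ k M b0).

Lemma projected_sym : M^T = M.
Proof. by rewrite !trmx_mul projP_sym symA mulmxA. Qed.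

Lemma projP_fixes_M : P *m M = M.
Proof. by rewrite !mulmxA projP_idem. Qed.

Lemma projP_fixes_b0 : P *m b0 = b0.
Proof. by rewrite !mulmxA projP_idem. Qed.

Lemma lanczosT_sym : (lanczosT k M b0)^T = lanczosT k M b0.
Proof.
by rewrite /lanczosT trmx_mul [(_ *m M)^T]trmx_mul trmxK projected_sym mulmxA.
Qed.

Hypotheses (b0_neq0 : b0 != 0) (kmax : le_kmax M b0 k).

Lemma lanczosQ_proj : P *m Q = Q.
Proof.
exact: (lanczosQ_fixed projected_sym b0_neq0 kmax projP_fixes_M projP_fixes_b0).
Qed.

Lemma lanczosQ_tr_projP : Q^T *m P = Q^T.
Proof. by rewrite -[in RHS]lanczosQ_proj trmx_mul projP_sym. Qed.

Lemma lanczosQ_tr_nzero : Q^T *m n0 = 0.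
Proof. by rewrite -lanczosQ_tr_projP -mulmxA projP_nzero ?mulmx0. Qed.

Lemma lanczosQ_tr_A : Q^T *m A *m Q = lanczosT k M b0.
Proof.
rewrite /lanczosT.
have -> : Q^T *m M *m Q = Q^T *m P *m A *m (P *m Q) by rewrite !mulmxA.
by rewrite lanczosQ_tr_projP lanczosQ_proj.
Qed.

Lemma lanczosQ_tr_Anzero : Q^T *m (A *m n0) = vnorm b0 *: e1 R k.
Proof.
rewrite -(lanczosQ_tr_b0 projected_sym b0_neq0 kmax) -[in LHS]lanczosQ_tr_projP.
by rewrite !mulmxA.
Qed.

End ProjectedLanczos.

Theorem theorem4p1 (R : realType) (n m : nat)
  (A : 'M[R]_n) (C : 'M[R]_(n, m)) (b : 'cV[R]_m)
  (hA : A^T = A) (hmn : (m < n)%N) (hC : \rank C = m)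
  (hn0 : vnorm (nzero C b) < 1)
  (hb0 : projP C *m A *m nzero C b != 0)
  (k : nat) (hk1 : (1 <= k)%N)
  (hk : le_kmax (projP C *m A *m projP C) (projP C *m A *m nzero C b) k)
  (mu : R) (x : 'cV[R]_k)
  (hmin : rLG_minimizer
            (lanczosT k (projP C *m A *m projP C) (projP C *m A *m nzero C b))
            (vnorm (projP C *m A *m nzero C b))
            (Num.sqrt (1 - vnorm (nzero C b) ^+ 2)) mu x) :
  is_min_on
    (fun v : 'cV[R]_n =>
       krylov k (projP C *m A *m projP C) (projP C *m A *m nzero C b)
              (v - nzero C b)
       /\ vnorm v = 1)
    (hq A)
    (nzero C b + lanczosQ k (projP C *m A *m projP C) (projP C *m A *m nzero C b) *m x).
Proof.
set gam := (X in rLG_minimizer _ _ X _ _) in hmin.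
set n0 := nzero C b; set Q := lanczosQ _ _ _.
have gam2 : gam ^+ 2 = 1 - dotv n0 n0.
  rewrite sqr_sqrtr vnorm_sqr // subr_ge0 -vnorm_sqr expr_le1 ?vnorm_ge0 //.
  exact: ltW.
have gam_gt0 : 0 < gam.
  by rewrite sqrtr_gt0 subr_gt0 expr_lt1 ?vnorm_ge0.
have [x_gam x_min] := rLG_minimizer_trs_min (lanczosT_sym _ _ _ hA) gam_gt0 hmin.
have symM := projected_sym C hA.
have sphereE y : vnorm (n0 + Q *m y) = 1 <-> vnorm y = gam.
  rewrite vnorm_eq ?ler01 // vnorm_eq ?ltW // gam2 expr1n.
  rewrite dotv_affine ?lanczosQ_orthonormal ?lanczosQ_tr_nzero //; split=> ?; lra.
have hqE y : hq A (n0 + Q *m y) =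
    hq A n0 + trs_obj (lanczosT k (projP C *m A *m projP C) (projP C *m A *m n0))
                      (vnorm (projP C *m A *m n0) *: e1 R k) y.
  by rewrite hq_affine // lanczosQ_tr_A // lanczosQ_tr_Anzero.
split=> [|v [/(krylov_lanczosQP symM hb0 hk)[y vE] v1]].
  split; last exact/sphereE.
  by apply/(krylov_lanczosQP symM hb0 hk); exists x; rewrite addrC addKr.
have {vE}vE : v = n0 + Q *m y by rewrite -vE addrC subrK.
by rewrite vE !hqE lerD2l; apply: x_min; apply/sphereE; rewrite -vE.
Qed.
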